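(* Let $p$ be a positive integer with $\tau(p) > m'$, where $m'$ is the largest number of linearly independent constraint matrices that can be simultaneously active, i.e. $m' = \max_{X\in\mathscr{X}} \dim \operatorname{span}\{A_i : A_i\bullet X = b_i\}$. Fix $A_1,\dots,A_m$ and $b$. Then for a generic $C\in\mathbb{S}^n$ (that is, for all $C$ outside a Lebesgue measure zero subset of $\mathbb{S}^n$), problem (BM) has no spurious 2-critical points: every 2-critical point $Y$ of (BM) is a global minimizer of (BM), and hence $YY^T$ is an optimal solution of (SDP).
   Context: Let $\mathbb{S}^n$ be the space of real symmetric $n\times n$ matrices, with inner product $A\bullet B=\operatorname{trace}(A^TB)$ (also used for $A\in\mathbb{S}^n$, $B\in\mathbb{R}^{n\times n}$), and $\mathbb{S}^n_+$ the cone of positive semidefinite matrices. Let $m=m_1+m_2$, let $C,A_1,\dots,A_m\in\mathbb{S}^n$, $b\in\mathbb{R}^m$, $\mathcal{A}(X)=(A_1\bullet X,\dots,A_m\bullet X)$ and $\mathcal{A}^*(\lambda)=\sum_i\lambda_iA_i$. Let $\mathscr{X}=\{X\in\mathbb{S}^n_+ : A_i\bullet X=b_i \ (i\le m_1),\ A_i\bullet X\ge b_i\ (m_1<i\le m)\}$; assume $\mathscr{X}$ is nonempty and that (SDP): $\min_{X\in\mathscr{X}} C\bullet X$ attains its minimum. Problem (BM) is $\min_{Y\in\mathbb{R}^{n\times p}} C\bullet YY^T$ subject to $YY^T\in\mathscr{X}$. For $Y$, let $I(Y)=\{i\in[m]: A_i\bullet YY^T=b_i\}$ and $S(\lambda)=C-\mathcal{A}^*(\lambda)$.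 A point $Y$ is 1-critical for (BM) if $YY^T\in\mathscr{X}$ and there is $\lambda\in\mathbb{R}^{m_1}\times\mathbb{R}^{m_2}_+$ with $\lambda_i=0$ for $i\notin I(Y)$ and $S(\lambda)Y=0$; it is 2-critical if moreover (for such a $\lambda$) $S(\lambda)\bullet UU^T\ge 0$ for all $U\in\mathbb{R}^{n\times p}$ with $A_i\bullet UY^T=0$ for all $i\in I(Y)$. A critical point is spurious if it is not a global minimizer of (BM). $\tau(k)=\binom{k+1}{2}$. *)

From HB Require Import structures.
From mathcomp Require Import all_boot all_order all_algebra.
From mathcomp Require Import reals.
Set Implicit Arguments. Unset Strict Implicit. Unset Printing Implicit Defensive.
Import Order.TTheory GRing.Theory Num.Theory.
Local Open Scope ring_scope.

Section Defs.
Variable R : realType.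

Definition tau (k : nat) : nat := 'C(k.+1, 2).

Definition dotm (k l : nat) (A B : 'M[R]_(k, l)) : R := \tr (A^T *m B).

Definition symm (n : nat) (X : 'M[R]_n) : Prop := X^T = X.

Definition psd (n : nat) (X : 'M[R]_n) : Prop :=
  symm X /\ forall v : 'cV[R]_n, 0 <= (v^T *m X *m v) 0 0.

Variables (n m1 m2 : nat) (A : 'I_(m1 + m2) -> 'M[R]_n) (b : 'I_(m1 + m2) -> R).

Definition feasible (X : 'M[R]_n) : Prop :=
  psd X /\ forall i : 'I_(m1 + m2),
    if (i < m1)%N then dotm (A i) X = b i else b i <= dotm (A i) X.

Definition activeb (X : 'M[R]_n) (i : 'I_(m1 + m2)) : bool := dotm (A i) X == b i.

Definition active_dim (X : 'M[R]_n) : nat :=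
  \rank (\matrix_(i < m1 + m2) (if activeb X i then mxvec (A i) else 0)).

Definition sdp_attains (C : 'M[R]_n) : Prop :=
  exists2 X0, feasible X0 & forall X, feasible X -> dotm C X0 <= dotm C X.

Definition Smat (C : 'M[R]_n) (lam : 'I_(m1 + m2) -> R) : 'M[R]_n :=
  C - \sum_(i < m1 + m2) lam i *: A i.

Variable p : nat.

Definition first_order_mult (C : 'M[R]_n) (Y : 'M[R]_(n, p))
    (lam : 'I_(m1 + m2) -> R) : Prop :=
  (forall i : 'I_(m1 + m2), (m1 <= i)%N -> 0 <= lam i) /\
  (forall i, ~~ activeb (Y *m Y^T) i -> lam i = 0) /\
  Smat C lam *m Y = 0.

Definition one_critical (C : 'M[R]_n) (Y : 'M[R]_(n, p)) : Prop :=
  feasible (Y *m Y^T) /\ exists lam, first_order_mult C Y lam.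

Definition two_critical (C : 'M[R]_n) (Y : 'M[R]_(n, p)) : Prop :=
  feasible (Y *m Y^T) /\ exists lam, first_order_mult C Y lam /\
    forall U : 'M[R]_(n, p),
      (forall i, activeb (Y *m Y^T) i -> dotm (A i) (U *m Y^T) = 0) ->
      0 <= dotm (Smat C lam) (U *m U^T).

Definition bm_global_min (C : 'M[R]_n) (Y : 'M[R]_(n, p)) : Prop :=
  feasible (Y *m Y^T) /\
  forall Y' : 'M[R]_(n, p), feasible (Y' *m Y'^T) ->
    dotm C (Y *m Y^T) <= dotm C (Y' *m Y'^T).

Definition sdp_optimal (C : 'M[R]_n) (X : 'M[R]_n) : Prop :=
  feasible X /\ forall X', feasible X' -> dotm C X <= dotm C X'.

End Defs.

(* S^n is identified with R^{tau(n)} through the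
   upper-triangular coordinates (C i j)_{i <= j}; a set N is null iff for every
   eps > 0 it is covered by countably many boxes (in these coordinates) of total
   volume <= eps (Lebesgue outer measure zero).  The flag [used] allows an
   empty/finite family of boxes (needed for the degenerate case n = 0). *)
Definition sym_null (R : realType) (n : nat) (N : 'M[R]_n -> Prop) : Prop :=
  forall eps : R, 0 < eps ->
  exists (used : nat -> bool) (lo hi : nat -> 'M[R]_n),
    (forall k (i j : 'I_n), (i <= j)%N -> lo k i j <= hi k i j) /\
    (forall C : 'M[R]_n, symm C -> N C ->
       exists2 k, used k & forall i j : 'I_n, (i <= j)%N -> lo k i j <= C i j <= hi k i j) /\
    (forall K : nat,
       \sum_(k < K | used k) \prod_(ij : 'I_n * 'I_n | (ij.1 <= ij.2)%N)
          (hi k ij.1 ij.2 - lo k ij.1 ij.2) <= eps).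

From HB Require Import structures.
From mathcomp Require Import all_boot all_order all_algebra.
From mathcomp Require Import reals.
From mathcomp Require Import ring lra zify.
Set Implicit Arguments. Unset Strict Implicit. Unset Printing Implicit Defensive.
Import Order.TTheory GRing.Theory Num.Theory.
Local Open Scope ring_scope.

(** Let [Y] be 2-critical with multiplier [lam] and [S = C - sum_i lam_i A_i].
   If [rank Y < p], choose [v <> 0] with [Y v = 0]; the second-order condition
   at [U = u v^T] gives [u^T S u >= 0], so [S] is positive semidefinite.  With
   [S Y = 0] and complementary slackness, [(lam, S)] is then a dual certificate
   with zero gap, so [Y Y^T] solves (SDP) and [Y] solves (BM).
   If [rank Y = p], normalize [Y] by an invertible [p x p] block of rows.  Then
   [C = S + sum_(i active) lam_i A_i] with [S] symmetric and [S Y = 0] lies in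
   the image of a polynomial map whose domain has dimension
   [(n - p) p + tau (n - p) + r], [r < tau p] the rank of the active
   constraints, i.e. less than [tau n = dim S^n].  Locally Lipschitz images of
   lower-dimensional spaces are null, and finitely many of them (one per active
   set and row block) cover every cost admitting a full-rank critical point. *)

(** * Null sets of symmetric matrices *)

Section SymNull.
Variables (R : realType) (n : nat).
Implicit Types (N : 'M[R]_n -> Prop) (lo hi : 'M[R]_n).

Definition box_vol lo hi : R :=
  \prod_(ij : 'I_n * 'I_n | (ij.1 <= ij.2)%N) (hi ij.1 ij.2 - lo ij.1 ij.2).

Lemma box_vol_ge0 lo hi :
  (forall i j : 'I_n, (i <= j)%N -> lo i j <= hi i j) -> 0 <= box_vol lo hi.
Proof. by move=> lohi; apply: prodr_ge0 => ij /lohi; rewrite subr_ge0. Qed.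

Lemma sym_nullS N1 N2 :
  (forall C, symm C -> N1 C -> N2 C) -> sym_null N2 -> sym_null N1.
Proof.
move=> N12 null2 e e0; have [used [lo [hi [lohi [cover vol]]]]] := null2 e e0.
by exists used, lo, hi; split=> //; split=> // C sC /(N12 _ sC); apply: cover.
Qed.

Lemma sym_null0 N : (forall C, ~ N C) -> sym_null N.
Proof.
move=> N0 e e0; exists (fun _ => false), (fun _ => 0), (fun _ => 0).
split=> //; split=> [C _ /N0 //|K]; by rewrite big_pred0 // ltW.
Qed.

Lemma sum_halves_le (e : R) (K : nat) : 0 <= e -> \sum_(a < K) e / 2 ^+ a.+1 <= e.
Proof.
move=> e0; suff -> : \sum_(a < K) e / 2 ^+ a.+1 = e - e / 2 ^+ K.
  by rewrite gerBl divr_ge0 ?exprn_ge0.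
elim: K => [|K IH]; first by rewrite big_ord0 expr0 divr1 subrr.
by rewrite big_ord_recr /= IH exprS; field; rewrite expf_neq0 ?pnatr_eq0.
Qed.

Lemma sum_indicator_le1 (K c : nat) : \sum_(k < K) ((k : nat) == c)%:R <= 1 :> R.
Proof.
case: (ltnP c K) => [cK|Kc].
  rewrite (bigD1 (Ordinal cK)) //= eqxx big1 ?addr0 // => k kc.
  by rewrite (_ : _ == c = false) //; apply: contraNF kc => /eqP kc; apply/eqP/val_inj.
rewrite big1 ?ler01 // => k _; rewrite (_ : _ == c = false) //.
by apply: contraTF Kc => /eqP <-; rewrite -ltnNge.
Qed.

Lemma sum_indicatorMl (B a0 : nat) (F : nat -> R) : (a0 < B)%N ->
  \sum_(a < B) ((a : nat) == a0)%:R * F a = F a0.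
Proof.
move=> a0B; rewrite (bigD1 (Ordinal a0B)) //= eqxx mul1r big1 ?addr0 // => a aa0.
by rewrite (_ : _ == a0 = false) ?mul0r //; apply: contraNF aa0 => /eqP ?; apply/eqP/val_inj.
Qed.

(* Pickling [nat * nat] is injective, so each pair is hit by at most one index. *)
Lemma sum_pickle_inv_le (w : nat -> nat -> R) (K : nat) : (forall a j, 0 <= w a j) ->
  exists B : nat,
    \sum_(k < K) (if @pickle_inv (nat * nat)%type k is Some (a, j) then w a j else 0)
    <= \sum_(a < B) \sum_(j < B) w a j.
Proof.
move=> w0; pose bnd (k : 'I_K) :=
  if @pickle_inv (nat * nat)%type k is Some (a, j) then maxn a j else 0%N.
pose B := (\max_k bnd k).+1; exists B.
have expand (k : 'I_K) : (if @pickle_inv (nat * nat)%type k is Some (a, j) then w a j else 0) =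
    \sum_(a < B) \sum_(j < B) (pickle_inv k == Some (a : nat, j : nat))%:R * w a j.
  have := leq_bigmax (F := bnd) k; rewrite /bnd.
  case: pickle_inv => [[a0 j0]|] /= bk; last first.
    by rewrite big1 // => a _; rewrite big1 // => j _; rewrite mul0r.
  have a0B : (a0 < B)%N by rewrite ltnS (leq_trans (leq_maxl a0 j0)).
  have j0B : (j0 < B)%N by rewrite ltnS (leq_trans (leq_maxr a0 j0)).
  rewrite -(sum_indicatorMl (fun a => w a j0) a0B); apply: eq_bigr => a _.
  rewrite -(sum_indicatorMl (fun j => w a j) j0B) mulr_sumr; apply: eq_bigr => j _.
  rewrite mulrA -natrM -[Some _ == _]/((a0, j0) == (a : nat, j : nat)) xpair_eqE.
  by rewrite mulnb [a0 == _]eq_sym [j0 == _]eq_sym.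
rewrite (eq_bigr _ (fun k _ => expand k)) exchange_big; apply: ler_sum => a _.
rewrite exchange_big; apply: ler_sum => j _; rewrite -mulr_suml ler_piMl //.
rewrite (eq_bigr (fun k : 'I_K => ((k : nat) == pickle (a : nat, j : nat))%:R)).
  exact: sum_indicator_le1.
move=> k _; suff -> : (pickle_inv k == Some (a : nat, j : nat)) =
    ((k : nat) == pickle (a : nat, j : nat)) by [].
apply/eqP/eqP => [e|->]; last exact: pickleK_inv.
by have := @pickle_invK (nat * nat)%type k; rewrite e.
Qed.

(* The [a]-th set is covered within volume [e / 2^(a+1)], and the covers are
   interleaved along [pickle : nat * nat -> nat]. *)
Lemma sym_null_bigcup (N : nat -> 'M[R]_n -> Prop) :
  (forall a, sym_null (N a)) -> sym_null (fun C => exists a, N a C).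
Proof.
move=> nullN e e0.
pose is_cover a (c : (nat -> bool) * (nat -> 'M[R]_n) * (nat -> 'M[R]_n)) :=
  let: (used, lo, hi) := c in
    (forall k (i j : 'I_n), (i <= j)%N -> lo k i j <= hi k i j) /\
    (forall C, symm C -> N a C ->
       exists2 k, used k & forall i j : 'I_n, (i <= j)%N -> lo k i j <= C i j <= hi k i j) /\
    (forall K, \sum_(k < K | used k) box_vol (lo k) (hi k) <= e / 2 ^+ a.+1).
have /boolp.choice [cov covP] : forall a, exists c, is_cover a c.
  move=> a; have [used [lo [hi cov]]] := nullN a _ (divr_gt0 e0 (exprn_gt0 a.+1 (ltr0Sn R 1))).
  by exists (used, lo, hi).
pose glue (T : Type) (f : nat -> nat -> T) (d : T) k :=
  if @pickle_inv (nat * nat)%type k is Some (a, j) then f a j else d.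
exists (glue _ (fun a => (cov a).1.1) false), (glue _ (fun a => (cov a).1.2) 0),
  (glue _ (fun a => (cov a).2) 0).
split; [|split].
- move=> k i j ij; rewrite /glue; case: pickle_inv => [[a l]|//].
  by have := covP a; case: (cov a) => [[used lo] hi] [lohi _]; apply: lohi.
- move=> C sC [a NC]; have := covP a; case Ea: (cov a) => [[used lo] hi] [_ [cover _]].
  have [l ul Cl] := cover C sC NC.
  by exists (pickle (a, l)); rewrite /glue pickleK_inv Ea.
move=> K; pose w a l := if (cov a).1.1 l then box_vol ((cov a).1.2 l) ((cov a).2 l) else 0.
have w0 a l : 0 <= w a l.
  rewrite /w; have := covP a; case: (cov a) => [[used lo] hi] [lohi _] /=.
  by case: (used l) => //; apply: box_vol_ge0 => i j; apply: lohi.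
rewrite big_mkcond /=.
have [B sumB] := sum_pickle_inv_le K w0.
have vol_a (a : 'I_B) : \sum_(l < B) w a l <= e / 2 ^+ a.+1.
  have := covP a; rewrite /w; case: (cov a) => [[used lo] hi] [_ [_ vol]] /=.
  by rewrite -big_mkcond; apply: vol.
apply: le_trans _ (sum_halves_le B (ltW e0)).
apply: le_trans _ (ler_sum _ (fun a _ => vol_a a)).
apply: le_trans _ sumB; apply: ler_sum => k _; rewrite /glue /w.
by case: pickle_inv => [[a l]|] //; case: ifP.
Qed.

Lemma sym_null_bigcup_fin (T : finType) (N : T -> 'M[R]_n -> Prop) :
  (forall t, sym_null (N t)) -> sym_null (fun C => exists t, N t C).
Proof.
move=> nullN.
pose N' (a : nat) C := exists2 t, (enum_rank t : nat) = a & N t C.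
apply: (sym_nullS (N2 := fun C => exists a, N' a C)) => [C _ [t Nt]|].
  by exists (enum_rank t : nat), t.
apply: sym_null_bigcup => a.
case: (boolp.EM (exists t : T, (enum_rank t : nat) = a)) => [[t0 t0a]|none].
  apply: (sym_nullS _ (nullN t0)) => C _ [t]; rewrite -t0a => /val_inj/enum_rank_inj -> //.
by apply: sym_null0 => C [t ta _]; apply: none; exists t.
Qed.

End SymNull.

(** * Counting upper-triangular entries *)

Section Tau.
Local Open Scope nat_scope.

Lemma tau_mul2 k : tau k * 2 = k.+1 * k.
Proof. by elim: k => [//|k IH]; rewrite /tau binS bin1 -/(tau k); nia. Qed.

Lemma tauD p q : tau (p + q) = tau p + tau q + p * q.
Proof. have := tau_mul2 (p + q); have := tau_mul2 p; have := tau_mul2 q; nia. Qed.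

(* The pairs [i <= j] and their transposes [j <= i] cover [S * S] and meet on
   the diagonal, so twice the count is [#|S|^2 + #|S|]. *)
Lemma card_upper_pairs n (S : {set 'I_n}) :
  #|[set ij : 'I_n * 'I_n | (ij.1 \in S) && (ij.2 \in S) && (ij.1 <= ij.2)]| = tau #|S|.
Proof.
set U := [set ij | _].
pose L := [set ij : 'I_n * 'I_n | (ij.1 \in S) && (ij.2 \in S) && (ij.2 <= ij.1)].
have cardL : #|L| = #|U|.
  have -> : L = [set (ij.2, ij.1) | ij in U].
    apply/setP => -[i j]; rewrite inE /=; apply/idP/imsetP => [ij|[[i' j'] + [-> ->]]].
      by exists (j, i) => //; rewrite inE /=; case/andP: ij => /andP [-> ->].
    by rewrite inE /= => /andP [/andP [-> ->]].
  by rewrite card_imset // => -[a b] [c d] [-> ->].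
have UL : U :|: L = setX S S.
  apply/setP => -[i j]; rewrite !inE /=.
  by case: (i \in S); case: (j \in S) => //=; apply: leq_total.
have cardUL : #|U :&: L| = #|S|.
  have -> : U :&: L = [set (i, i) | i in S].
    apply/setP => -[i j]; rewrite !inE /=; apply/idP/imsetP => [|[i' iS [-> ->]]].
      move=> /andP [/andP [/andP [iS _] ij] /andP [_ ji]].
      by exists i => //; congr pair; apply/val_inj/eqP; rewrite eqn_leq ij ji.
    by rewrite iS leqnn.
  by rewrite card_imset // => a a' [].
have := cardsUI U L; rewrite UL cardsX cardUL cardL.
have := tau_mul2 #|S|; move: #|S| #|U| => s u; nia.
Qed.

Lemma card_upper n : #|[pred ij : 'I_n * 'I_n | ij.1 <= ij.2]| = tau n.
Proof.
by rewrite -[n in tau n]card_ord -cardsT -card_upper_pairs; apply: eq_card => ij; rewrite !inE.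
Qed.

End Tau.

(** * Locally Lipschitz maps and their null images *)

Section Lipschitz.
Variables (R : realType) (I : finType).
Implicit Types (x y : I -> R) (B : R).

Definition dist1 x y : R := \sum_k `|x k - y k|.

Definition in_box B x := forall k, `|x k| <= B.

Definition locally_lipschitz a b (f : (I -> R) -> 'M[R]_(a, b)) :=
  forall B, exists2 L : R, 0 <= L & forall x y, in_box B x -> in_box B y ->
    forall i j, `|f x i j - f y i j| <= L * dist1 x y.

Lemma dist1_ge0 x y : 0 <= dist1 x y.
Proof. exact: sumr_ge0. Qed.

Lemma ler_dist1 x y k : `|x k - y k| <= dist1 x y.
Proof. by rewrite /dist1 (bigD1 k) //= lerDl sumr_ge0. Qed.

Lemma in_box_norm B x : in_box B x -> in_box `|B| x.
Proof. by move=> xB k; apply: le_trans (xB k) (ler_norm B). Qed.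

Lemma locally_lipschitz_bounded a b (f : (I -> R) -> 'M[R]_(a, b)) B :
  locally_lipschitz f ->
  exists2 M, 0 <= M & forall x, in_box B x -> forall i j, `|f x i j| <= M.
Proof.
move=> lipf; have [L L0 fL] := lipf `|B|; pose o : I -> R := fun _ => 0.
exists (\sum_i \sum_j `|f o i j| + L * (#|I|%:R * `|B|)) => [|x /in_box_norm xB i j].
  by rewrite addr_ge0 ?mulr_ge0 ?sumr_ge0 // => *; rewrite sumr_ge0.
have oB : in_box `|B| o by move=> k; rewrite normr0.
have f0 : `|f o i j| <= \sum_i \sum_j `|f o i j|.
  rewrite (bigD1 i) //= (bigD1 j) //= -addrA lerDl.
  by rewrite addr_ge0 ?sumr_ge0 // => *; rewrite sumr_ge0.
have dist_o : dist1 x o <= #|I|%:R * `|B|.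
  by rewrite /dist1 mulr_natl -sumr_const; apply: ler_sum => k _; rewrite subr0.
rewrite -[f x i j](subrK (f o i j)); apply: le_trans (ler_normD _ _) _.
by rewrite addrC lerD // (le_trans (fL _ _ xB oB i j)) // ler_wpM2l.
Qed.

Lemma lipschitz_const a b (c : 'M[R]_(a, b)) : locally_lipschitz (fun _ => c).
Proof. by move=> B; exists 0 => // x y _ _ i j; rewrite subrr normr0 mul0r. Qed.

Lemma lipschitz_coord a b (e : (I -> R) -> 'I_a -> 'I_b -> R) :
  (forall i j, (forall x, e x i j = 0) \/ exists k, forall x, e x i j = x k) ->
  locally_lipschitz (fun x => \matrix_(i, j) e x i j).
Proof.
move=> coord B; exists 1 => // x y _ _ i j; rewrite !mxE mul1r.
case: (coord i j) => [e0 | [k ek]]; last by rewrite !ek ler_dist1.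
by rewrite !e0 subrr normr0 dist1_ge0.
Qed.

Lemma lipschitzD a b (f g : (I -> R) -> 'M[R]_(a, b)) :
  locally_lipschitz f -> locally_lipschitz g -> locally_lipschitz (fun x => f x + g x).
Proof.
move=> lipf lipg B; have [L1 L10 fL] := lipf B; have [L2 L20 gL] := lipg B.
exists (L1 + L2) => [|x y xB yB i j]; first exact: addr_ge0.
rewrite !mxE opprD addrACA mulrDl; apply: le_trans (ler_normD _ _) _.
exact: lerD (fL _ _ xB yB i j) (gL _ _ xB yB i j).
Qed.

Lemma lipschitzN a b (f : (I -> R) -> 'M[R]_(a, b)) :
  locally_lipschitz f -> locally_lipschitz (fun x => - f x).
Proof.
move=> lipf B; have [L L0 fL] := lipf B.
by exists L => // x y xB yB i j; rewrite !mxE -opprD normrN; apply: fL.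
Qed.

Lemma lipschitzB a b (f g : (I -> R) -> 'M[R]_(a, b)) :
  locally_lipschitz f -> locally_lipschitz g -> locally_lipschitz (fun x => f x - g x).
Proof. by move=> lipf lipg; apply: lipschitzD => //; apply: lipschitzN. Qed.

Lemma lipschitz_reindex a b c d (f : (I -> R) -> 'M[R]_(a, b))
    (g : (I -> R) -> 'M[R]_(c, d)) (r : 'I_c -> 'I_d -> 'I_a) (s : 'I_c -> 'I_d -> 'I_b) :
  locally_lipschitz f -> (forall x i j, g x i j = f x (r i j) (s i j)) ->
  locally_lipschitz g.
Proof.
move=> lipf gf B; have [L L0 fL] := lipf B.
by exists L => // x y xB yB i j; rewrite !gf; apply: fL.
Qed.

Lemma lipschitz_tr a b (f : (I -> R) -> 'M[R]_(a, b)) :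
  locally_lipschitz f -> locally_lipschitz (fun x => (f x)^T).
Proof.
move=> lipf; apply: (lipschitz_reindex (r := fun _ j => j) (s := fun i _ => i) lipf).
by move=> x i j; rewrite mxE.
Qed.

(* [fg - f'g' = f(g - g') + g'(f - f')] with [f] and [g'] locally bounded. *)
Lemma lipschitzM a b c (f : (I -> R) -> 'M[R]_(a, b)) (g : (I -> R) -> 'M[R]_(b, c)) :
  locally_lipschitz f -> locally_lipschitz g -> locally_lipschitz (fun x => f x *m g x).
Proof.
move=> lipf lipg B; have [L1 L10 fL] := lipf B; have [L2 L20 gL] := lipg B.
have [M1 M10 fM] := locally_lipschitz_bounded B lipf.
have [M2 M20 gM] := locally_lipschitz_bounded B lipg.
exists (b%:R * (M1 * L2 + M2 * L1)) => [|x y xB yB i j].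
  by rewrite !mulr_ge0 ?addr_ge0 ?mulr_ge0.
rewrite !mxE -sumrB; apply: le_trans (ler_norm_sum _ _ _) _.
rewrite -mulrA mulr_natl -[in X in _ <= X](card_ord b) -sumr_const; apply: ler_sum => k _.
have -> : f x i k * g x k j - f y i k * g y k j
   = f x i k * (g x k j - g y k j) + g y k j * (f x i k - f y i k) by ring.
apply: le_trans (ler_normD _ _) _; rewrite !normrM mulrDl -!mulrA.
by apply: lerD; apply: ler_pM; rewrite ?normr_ge0 ?fM ?gM ?fL ?gL.
Qed.

End Lipschitz.

Section LipschitzImage.
Variables (R : realType) (n : nat).

(* The centre of the [j]-th of [M] equal cells of [[-B, B]]. *)
Definition grid_pt (B : R) (M j : nat) : R := - B + (2 * j%:R + 1) * B / M%:R.

Lemma grid_cell (m : nat) (s : R) :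
  0 <= s <= m.+1%:R -> exists j : 'I_m.+1, j%:R <= s <= j.+1%:R.
Proof.
elim: m s => [|m IH] s /andP [s0 sm]; first by exists ord0; rewrite s0.
have [sm'|ms] := lerP s m.+1%:R.
  by have [|j js] := IH s; [rewrite s0 | exists (widen_ord (leqnSn _) j)].
by exists ord_max; rewrite (ltW ms).
Qed.

Lemma grid_pt_near (B t : R) (m : nat) : 0 < B -> `|t| <= B ->
  exists j : 'I_m.+1, `|t - grid_pt B m.+1 j| <= B / m.+1%:R.
Proof.
move=> B0; rewrite ler_norml => /andP [tB1 tB2].
have M0 : 0 < m.+1%:R :> R by rewrite ltr0n.
pose s := (t + B) * m.+1%:R / (2 * B).
have [|j /andP [js sj]] := @grid_cell m s.
  apply/andP; split; first by rewrite /s divr_ge0 ?mulr_ge0; lra.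
  by rewrite /s ler_pdivrMr ?mulr_gt0 // mulrC ler_wpM2l //; lra.
exists j; have -> : t - grid_pt B m.+1 j = (2 * s - 2 * j%:R - 1) * (B / m.+1%:R).
  by rewrite /grid_pt /s; field; rewrite addrC natr1 pnatr_eq0 lt0r_neq0.
rewrite normrM (ger0_norm (_ : 0 <= B / m.+1%:R)) ?divr_ge0 //; last lra.
apply: ler_piMl; first by rewrite divr_ge0 // ltW.
by rewrite ler_norml; move: sj; rewrite -natr1; lra.
Qed.

Lemma grid_pt_in_box (B : R) (m : nat) (j : 'I_m.+1) : 0 < B -> `|grid_pt B m.+1 j| <= B.
Proof.
move=> B0; have M0 : 0 < m.+1%:R :> R by rewrite ltr0n.
have -> : grid_pt B m.+1 j = B * ((2 * j%:R + 1) / m.+1%:R - 1).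
  by rewrite /grid_pt; field; rewrite addrC natr1 pnatr_eq0.
rewrite normrM (gtr0_norm B0); apply: ler_piMr; first exact: ltW.
have q0 : 0 <= (2 * j%:R + 1) / m.+1%:R :> R by rewrite divr_ge0 // addr_ge0 // mulr_ge0.
have q2 : (2 * j%:R + 1) / m.+1%:R <= 2 :> R.
  rewrite ler_pdivrMr //; have : (2 * j + 1 <= 2 * m.+1)%N by move: (ltn_ord j); lia.
  by rewrite -(ler_nat R) natrD !natrM.
move: q0 q2; set y := (2 * _ + 1) / _ => q0 q2.
by rewrite ler_norml; apply/andP; split; lra.
Qed.

Lemma sum_ord_lt_const_le (K c : nat) (v : R) : 0 <= v ->
  \sum_(k < K | (k < c)%N) v <= v *+ c.
Proof.
move=> v0; have [cK|Kc] := leqP c K; first by rewrite (big_ord_narrow cK) sumr_const card_ord.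
under eq_bigl => k do rewrite (ltn_trans (ltn_ord k) Kc).
by rewrite sumr_const card_ord ler_wpMn2l // ltnW.
Qed.

Lemma grid_volume_le (a : R) (M K D : nat) : (K < D)%N -> 0 <= a -> (0 < M)%N ->
  (a / M%:R) ^+ D *+ (M ^ K) <= a ^+ D / M%:R.
Proof.
move=> KD a0 M0; have M0' : 0 < M%:R :> R by rewrite ltr0n.
have [e ->] : exists e, D = (K + e.+1)%N by exists (D - K.+1)%N; lia.
rewrite -mulr_natr natrX exprMn -mulrA ler_wpM2l ?exprn_ge0 //.
rewrite exprD mulrAC -exprMn mulVf ?lt0r_neq0 // expr1n mul1r exprS.
apply: ler_piMr; first by rewrite invr_ge0 ltW.
by apply: exprn_ile1; [rewrite invr_ge0 ltW | rewrite invf_le1 // ler1n].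
Qed.

(* Cut the box into [M ^ #|I|] cubes of side [2 B / M]; the image of each lies in
   a box of side [a / M], [a = 2 L #|I| B], in each of the [tau n] coordinates, so
   as [#|I| < tau n] the total volume is at most [a ^ tau n / M]. *)
Lemma sym_null_lipschitz_box (I : finType) (f : (I -> R) -> 'M[R]_n) (B L : R) :
  (#|I| < tau n)%N -> 0 < B -> 0 <= L ->
  (forall x y, in_box B x -> in_box B y ->
     forall i j, `|f x i j - f y i j| <= L * dist1 x y) ->
  sym_null (fun C => exists2 x, in_box B x & C = f x).
Proof.
move=> IN B0 L0 fL e e0.
pose a := 2 * (L * (#|I|%:R * B)).
have a0 : 0 <= a by rewrite /a !mulr_ge0 // ltW.
have aD0 : 0 <= a ^+ tau n / e by rewrite divr_ge0 ?exprn_ge0 // ltW.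
pose m := Num.Def.archi_bound (a ^+ tau n / e); pose M := m.+1.
have M0 : 0 < M%:R :> R by rewrite ltr0n.
have aMe : a ^+ tau n / M%:R <= e.
  rewrite ler_pdivrMr // mulrC -ler_pdivrMr //; apply/ltW/(lt_trans (archi_boundP aD0)).
  by rewrite ltr_nat.
pose dl := L * (#|I|%:R * (B / M%:R)).
have dl0 : 0 <= dl by rewrite /dl !mulr_ge0 // ?invr_ge0 ltW.
pose T := {ffun I -> 'I_M}.
pose ctr (c : T) k := grid_pt B M (c k).
pose cell k := nth [ffun=> ord0] (enum T) k.
exists (fun k => (k < #|T|)%N), (fun k => \matrix_(i, j) (f (ctr (cell k)) i j - dl)),
  (fun k => \matrix_(i, j) (f (ctr (cell k)) i j + dl)).
split; [|split].
- by move=> k i j _; rewrite !mxE lerD2l; lra.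
- move=> C _ [x xB ->].
  have [c xc] := fin_all_exists (fun k => grid_pt_near m B0 (xB k)).
  exists (index [ffun k => c k] (enum T)); first by rewrite cardE index_mem mem_enum.
  move=> i j _; rewrite !mxE /cell nth_index ?mem_enum //.
  have ctrB : in_box B (ctr [ffun k => c k]) by move=> k; rewrite /ctr ffunE grid_pt_in_box.
  have dist : dist1 x (ctr [ffun k => c k]) <= #|I|%:R * (B / M%:R).
    by rewrite /dist1 mulr_natl -sumr_const; apply: ler_sum => k _; rewrite /ctr ffunE xc.
  have := le_trans (fL _ _ xB ctrB i j) (ler_wpM2l L0 dist).
  by rewrite /dl ler_norml => /andP [? ?]; apply/andP; split; lra.
have cell_vol k : \prod_(ij : 'I_n * 'I_n | (ij.1 <= ij.2)%N)
    ((\matrix_(i, j) (f (ctr (cell k)) i j + dl)) ij.1 ij.2 -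
     (\matrix_(i, j) (f (ctr (cell k)) i j - dl)) ij.1 ij.2) = (a / M%:R) ^+ tau n.
  rewrite -card_upper -prodr_const; apply: eq_bigr => ij _.
  by rewrite !mxE /a /dl; field; rewrite lt0r_neq0.
move=> K; under eq_bigr => k _ do rewrite cell_vol.
apply: le_trans (sum_ord_lt_const_le _ _ _) _; first by rewrite exprn_ge0 // divr_ge0 // ltW.
by rewrite card_ffun !card_ord; apply: le_trans (grid_volume_le _ _ _) aMe.
Qed.

Lemma sym_null_lipschitz_image (I : finType) (f : (I -> R) -> 'M[R]_n) :
  (#|I| < tau n)%N -> locally_lipschitz f -> sym_null (fun C => exists x, C = f x).
Proof.
move=> IN lipf.
apply: (sym_nullS (N2 := fun C => exists t : nat, exists2 x, in_box t.+1%:R x & C = f x)).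
  move=> C _ [x ->]; have x0 : 0 <= \sum_k `|x k| by rewrite sumr_ge0.
  exists (Num.Def.archi_bound (\sum_k `|x k|)), x => // k.
  apply: le_trans (ltW (lt_trans (archi_boundP x0) _)); last by rewrite ltr_nat.
  by rewrite (bigD1 k) //= lerDl sumr_ge0.
apply: sym_null_bigcup => t; have [L L0 fL] := lipf t.+1%:R.
exact: sym_null_lipschitz_box IN (ltr0Sn _ _) L0 fL.
Qed.

End LipschitzImage.

(** * Positive semidefinite matrices and duality *)

Section Psd.
Variables (R : realType) (n : nat).
Implicit Types (M S X : 'M[R]_n) (u v w : 'cV[R]_n).

Definition bform M u w : R := (u^T *m M *m w) 0 0.

Lemma bformC M u w : M^T = M -> bform M u w = bform M w u.
Proof.
move=> Msym; have tr11 (a : 'M[R]_1) : a 0 0 = a^T 0 0 by rewrite mxE.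
by rewrite /bform tr11 !trmx_mul trmxK Msym mulmxA.
Qed.

Lemma bformDl M u v w : bform M (u + v) w = bform M u w + bform M v w.
Proof. by rewrite /bform linearD /= !mulmxDl mxE. Qed.

Lemma bformDr M u v w : bform M w (u + v) = bform M w u + bform M w v.
Proof. by rewrite /bform mulmxDr mxE. Qed.

Lemma bformZl M t u w : bform M (t *: u) w = t * bform M u w.
Proof. by rewrite /bform linearZ /= -!scalemxAl mxE. Qed.

Lemma bformZr M t u w : bform M w (t *: u) = t * bform M w u.
Proof. by rewrite /bform -scalemxAr mxE. Qed.

Lemma bform_addZ M u w t : M^T = M ->
  bform M (u + t *: w) (u + t *: w) = bform M u u + 2 * t * bform M u w + t ^+ 2 * bform M w w.
Proof. by move=> Msym; rewrite bformDl !bformDr !bformZl !bformZr (bformC w u Msym); ring. Qed.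

Lemma bform_delta M i j : bform M (delta_mx i 0) (delta_mx j 0) = M i j.
Proof.
rewrite /bform trmx_delta -rowE mxE (bigD1 j) //= !mxE !eqxx mulr1 big1 ?addr0 // => k kj.
by rewrite !mxE (negbTE kj) mulr0.
Qed.

Lemma psd_diag_ge0 X c : psd X -> 0 <= X c c.
Proof. by case=> _ Xpsd; rewrite -bform_delta; apply: Xpsd. Qed.

(* Otherwise [delta_mx j 0 + t *: delta_mx c 0] has a negative square for some [t]. *)
Lemma psd_diag0_col0 X c : psd X -> X c c = 0 -> forall j, X j c = 0.
Proof.
case=> Xsym Xpsd Xcc j; apply/eqP/negP => /negP Xjc.
pose t := - (X j j + 1) / (2 * X j c).
have := Xpsd (delta_mx j 0 + t *: delta_mx c 0); rewrite -/(bform _ _ _).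
rewrite bform_addZ // !bform_delta Xcc mulr0 addr0.
have -> : X j j + 2 * t * X j c = -1 by rewrite /t; field.
by rewrite lerNr oppr0 ler10.
Qed.

Lemma bformBZ M N s u w : bform (M - s *: N) u w = bform M u w - s * bform N u w.
Proof. by rewrite /bform mulmxBr mulmxBl -scalemxAr -scalemxAl !mxE. Qed.

Lemma mx11_mulE (a b : 'M[R]_1) : (a *m b) 0 0 = a 0 0 * b 0 0.
Proof. by rewrite mxE big_ord1. Qed.

Definition schur_step X c := X - (X c c)^-1 *: (col c X *m (col c X)^T).

Lemma bform_schur_step X c v : X^T = X ->
  bform (schur_step X c) v v = bform X v v - (X c c)^-1 * bform X (delta_mx c 0) v ^+ 2.
Proof.
move=> Xsym; have colc : ((col c X)^T *m v) 0 0 = bform X (delta_mx c 0) v.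
  by rewrite /bform tr_col Xsym trmx_delta -rowE.
rewrite /schur_step bformBZ; congr (_ - _ * _).
rewrite /bform mulmxA -mulmxA mx11_mulE colc expr2; congr (_ * _).
by rewrite -[v^T *m col c X]trmxK trmx_mul trmxK mxE.
Qed.

(* Completing the square in the [c]-th coordinate. *)
Lemma psd_schur_step X c : psd X -> X c c != 0 -> psd (schur_step X c).
Proof.
case=> Xsym Xpsd Xcc; split.
  by rewrite /symm /schur_step linearB /= linearZ /= trmx_mul trmxK Xsym.
move=> v; rewrite -/(bform _ _ _) bform_schur_step //.
set t := - bform X (delta_mx c 0) v / X c c.
have := Xpsd (v + t *: delta_mx c 0); rewrite -/(bform _ _ _) bform_addZ // bform_delta.
by rewrite (bformC v _ Xsym) /t; congr (0 <= _); field.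
Qed.

Lemma schur_stepE X c i j :
  schur_step X c i j = X i j - (X c c)^-1 * (X i c * X j c).
Proof. by rewrite !mxE big_ord1 !mxE. Qed.

(* Induction on the number of nonzero trailing rows of [X]: the last one either
   vanishes with its column, or one Schur step removes it and splits off a
   rank-one positive semidefinite term. *)
Lemma trace_mul_psd S X : psd S -> psd X -> 0 <= \tr (S *m X).
Proof.
move=> [Ssym Spsd]; suff H k : forall X, psd X ->
    (forall i j : 'I_n, (i < n - k)%N -> X i j = 0) -> 0 <= \tr (S *m X).
  by move=> Xpsd; apply: (H n) => // i j; rewrite subnn.
elim: k => [|k IH] {}X Xpsd Xrows.
  have -> : X = 0 by apply/matrixP => i j; rewrite mxE Xrows // subn0.
  by rewrite mulmx0 mxtrace0.
have [kn|nk] := ltnP k n; last by apply: IH => // i j ink; apply: Xrows; lia.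
have cn : (n - k.+1 < n)%N by lia.
pose c := Ordinal cn.
have Xsym i j : X i j = X j i by rewrite -[in LHS](proj1 Xpsd) mxE.
have row_c (i : 'I_n) : (i < n - k)%N -> (i < n - k.+1)%N \/ i = c.
  by move=> ink; case: (ltnP i (n - k.+1)) => ?; [left | right; apply: val_inj => /=; lia].
have [Xcc0|Xcc0] := eqVneq (X c c) 0.
  have Xc0 := psd_diag0_col0 Xpsd Xcc0.
  apply: IH => // i j /row_c [/Xrows -> // | ->]; by rewrite Xsym Xc0.
have -> : X = schur_step X c + (X c c)^-1 *: (col c X *m (col c X)^T) by rewrite subrK.
rewrite mulmxDr mxtraceD -scalemxAr mxtraceZ; apply: addr_ge0.
  apply: IH => [|i j /row_c [ick | ->]]; first exact: psd_schur_step.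
    by rewrite schur_stepE (Xrows i j ick) (Xrows i c ick) mul0r mulr0 subr0.
  by rewrite schur_stepE [X j c]Xsym mulrA mulVf // mul1r subrr.
rewrite mulr_ge0 ?invr_ge0 ?psd_diag_ge0 //.
by rewrite mulmxA mxtrace_mulC mulmxA trace_mx11; apply: Spsd.
Qed.

End Psd.

Section Duality.
Variables (R : realType) (n m1 m2 p : nat).
Variables (A : 'I_(m1 + m2) -> 'M[R]_n) (b : 'I_(m1 + m2) -> R).
Hypothesis A_sym : forall i, symm (A i).

Lemma dotm_Smat C lam X :
  dotm (Smat A C lam) X = dotm C X - \sum_i lam i * dotm (A i) X.
Proof.
rewrite /dotm /Smat linearB /= mulmxBl linearB /=; congr (_ - _).
rewrite linear_sum /= mulmx_suml raddf_sum; apply: eq_bigr => i _.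
by rewrite linearZ /= -scalemxAl mxtraceZ.
Qed.

Lemma Smat_sym C lam : symm C -> symm (Smat A C lam).
Proof.
move=> Csym; rewrite /symm /Smat linearB /= linear_sum /= Csym; congr (_ - _).
by apply: eq_bigr => i _; rewrite linearZ /= A_sym.
Qed.

(* Weak duality: [S(lam)] and [lam] form a dual certificate with zero gap. *)
Lemma psd_multiplier_optimal C (Y : 'M[R]_(n, p)) lam :
  symm C -> first_order_mult A b C Y lam -> feasible A b (Y *m Y^T) ->
  psd (Smat A C lam) -> forall X, feasible A b X -> dotm C (Y *m Y^T) <= dotm C X.
Proof.
move=> Csym [lam_ge0 [lam_act SY0]] _ Spsd X [Xpsd Xcons].
have gap0 : dotm (Smat A C lam) (Y *m Y^T) = 0.
  by rewrite /dotm (Smat_sym lam Csym) mulmxA SY0 mul0mx mxtrace0.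
have valY : dotm C (Y *m Y^T) = \sum_i lam i * b i.
  move/eqP: gap0; rewrite dotm_Smat subr_eq0 => /eqP ->; apply: eq_bigr => i _.
  by case: (boolP (activeb A b (Y *m Y^T) i)) => [/eqP -> // | /lam_act ->]; rewrite !mul0r.
rewrite valY -[dotm C X](subrK (\sum_i lam i * dotm (A i) X)) -dotm_Smat.
rewrite -[X in X <= _]add0r lerD //.
  by rewrite /dotm (Smat_sym lam Csym); apply: trace_mul_psd.
apply: ler_sum => i _; have := Xcons i; case: ifP => [_ -> // | im1 bA].
by rewrite ler_wpM2l // lam_ge0 // leqNgt im1.
Qed.

Lemma tr_kernel_nonzero (Y : 'M[R]_(n, p)) : (\rank Y < p)%N ->
  exists2 v : 'rV[R]_p, v != 0 & v *m Y^T = 0.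
Proof.
move=> rY; have K0 : kermx Y^T != 0 by rewrite -mxrank_eq0 mxrank_ker mxrank_tr -lt0n subn_gt0.
have [i Ki] : exists i, row i (kermx Y^T) != 0.
  apply/existsP; apply: contraNT K0 => /existsPn K0.
  by apply/eqP/row_matrixP => i; rewrite row0; apply/eqP/negPn.
by exists (row i (kermx Y^T)); rewrite // -row_mul mulmx_ker row0.
Qed.

Lemma two_critical_psd C (Y : 'M[R]_(n, p)) : symm C ->
  two_critical A b C Y -> (\rank Y < p)%N ->
  exists lam, first_order_mult A b C Y lam /\ psd (Smat A C lam).
Proof.
move=> Csym [_ [lam [lam_fo second]]] rY; exists lam; split=> //.
split=> [|u]; first exact: Smat_sym.
have [v v0 vY] := tr_kernel_nonzero rY.
have vv0 : 0 < (v *m v^T) 0 0.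
  have [k vk] : exists k, v 0 k != 0.
    apply/existsP; apply: contraNT v0 => /existsPn v0.
    by apply/eqP/rowP => k; rewrite mxE; apply/eqP/negPn.
  have vk2 : 0 < v 0 k ^+ 2 by rewrite exprn_even_gt0.
  rewrite mxE (bigD1 k) //= mxE -expr2; apply: (lt_le_trans vk2).
  by rewrite lerDl sumr_ge0 // => j _; rewrite mxE -expr2 sqr_ge0.
have UY : u *m v *m Y^T = 0 by rewrite -mulmxA vY mulmx0.
have : 0 <= dotm (Smat A C lam) (u *m v *m (u *m v)^T).
  by apply: second => i _; rewrite UY /dotm mulmx0 mxtrace0.
rewrite trmx_mul !mulmxA -(mulmxA u v) [v *m _]mx11_scalar mul_mx_scalar -scalemxAl.
rewrite /dotm (Smat_sym lam Csym) -scalemxAr mxtraceZ pmulr_rge0 //.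
by rewrite mulmxA mxtrace_mulC mulmxA trace_mx11.
Qed.

Lemma two_critical_rank_deficient_optimal C (Y : 'M[R]_(n, p)) : symm C ->
  two_critical A b C Y -> (\rank Y < p)%N ->
  bm_global_min A b C Y /\ sdp_optimal A b C (Y *m Y^T).
Proof.
move=> Csym Y2 rY; have [lam [lam_fo Spsd]] := two_critical_psd Csym Y2 rY.
have opt := psd_multiplier_optimal Csym lam_fo Y2.1 Spsd.
by split; split=> [|Y' /opt //]; apply: Y2.1.
Qed.

End Duality.

(** * A chart for costs with a full-rank critical point *)

Lemma sym_kernel_factor (R : comRingType) (n p : nat) (F Z : 'M[R]_(n, p)) (P S : 'M[R]_n) :
  F^T *m Z = 1%:M -> F *m F^T + P = 1%:M -> P^T = P -> P *m P = P -> P *m F = 0 ->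
  S^T = S -> S *m Z = 0 ->
  let T := P - F *m Z^T *m P in S = T *m (P *m S *m P) *m T^T.
Proof.
move=> FZ FFP Psym PP PF Ssym SZ T.
have ZFPZ : Z = F + P *m Z by rewrite -{1}[Z]mul1mx -FFP mulmxDl -mulmxA FZ mulmx1.
have SF : S *m F = - (S *m P *m Z).
  by apply/eqP; rewrite -addr_eq0 -mulmxA -mulmxDr -ZFPZ SZ.
have TT : T^T = P - P *m Z *m F^T by rewrite /T linearB /= !trmx_mul Psym trmxK mulmxA.
have ST : S = S *m P *m T^T.
  rewrite TT mulmxBr !mulmxA -[S *m P *m P]mulmxA PP.
  by rewrite -{1}[S]mulmx1 -FFP mulmxDr mulmxA SF mulNmx addrC.
have TS : S = T *m P *m S by rewrite -{1}Ssym {1}ST !trmx_mul trmxK Psym Ssym mulmxA.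
by rewrite {1}TS {1}ST !mulmxA.
Qed.

Section Chart.
Variables (R : realType) (n p : nat) (f : 'I_p -> 'I_n).

Definition imf : {set 'I_n} := [set f j | j : 'I_p].

Definition sel_mx : 'M[R]_(n, p) := \matrix_(i, j) (i == f j)%:R.

Definition coproj_mx : 'M[R]_n := diag_mx (\row_i (i \notin imf)%:R).

Lemma coproj_mxE k (M : 'M[R]_(n, k)) :
  coproj_mx *m M = \matrix_(i, j) ((i \notin imf)%:R * M i j).
Proof. by rewrite mul_diag_mx; apply/matrixP => i j; rewrite !mxE. Qed.

Lemma tr_coproj_mx : coproj_mx^T = coproj_mx.
Proof. exact: tr_diag_mx. Qed.

Lemma coproj_mx_idem : coproj_mx *m coproj_mx = coproj_mx.
Proof.
rewrite coproj_mxE; apply/matrixP => i j; rewrite !mxE.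
by case: (i \in imf); case: (i == j); rewrite /= ?mul0r ?mul1r.
Qed.

Lemma coproj_sel_mx : coproj_mx *m sel_mx = 0.
Proof.
rewrite coproj_mxE; apply/matrixP => i j; rewrite !mxE.
by case: eqP => [->|_]; rewrite ?mulr0 // imset_f // mul0r.
Qed.

Lemma tr_sel_mul k (M : 'M[R]_(n, k)) : sel_mx^T *m M = \matrix_(j, l) M (f j) l.
Proof.
apply/matrixP => j l; rewrite !mxE (bigD1 (f j)) //= !mxE eqxx mul1r big1 ?addr0 //.
by move=> i fji; rewrite !mxE (negbTE fji) mul0r.
Qed.

Hypothesis f_inj : injective f.

Lemma sel_coproj_partition : sel_mx *m sel_mx^T + coproj_mx = 1%:M.
Proof.
apply/matrixP => i k; rewrite !mxE; case: (boolP (i \in imf)) => [/imsetP [j _ ->]|fi].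
  rewrite (bigD1 j) //= !mxE eqxx mul1r big1 => [|l lj]; last first.
    by rewrite !mxE (inj_eq f_inj) eq_sym (negbTE lj) mul0r.
  by rewrite addr0 mul0rn addr0 eq_sym.
rewrite big1 ?add0r // => j _; rewrite !mxE; case: eqP => [ij|_]; last by rewrite mul0r.
by move: fi; rewrite ij imset_f.
Qed.

Variable r : nat.

Definition chart_Z := {x : 'I_n * 'I_p | x.1 \notin imf}.
Definition chart_S :=
  {x : 'I_n * 'I_n | (x.1 \notin imf) && (x.2 \notin imf) && (x.1 <= x.2)%N}.
Definition chart_dom := (chart_Z + chart_S + 'I_r)%type.

Definition ordpair (i j : 'I_n) : 'I_n * 'I_n := if (i <= j)%N then (i, j) else (j, i).

Definition chart_Zmx (x : chart_dom -> R) : 'M[R]_(n, p) :=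
  \matrix_(i, j) (if (insub (i, j) : option chart_Z) is Some d then x (inl (inl d)) else 0).
Definition chart_Smx (x : chart_dom -> R) : 'M[R]_n :=
  \matrix_(i, j)
    (if (insub (ordpair i j) : option chart_S) is Some d then x (inl (inr d)) else 0).
Definition chart_mu (x : chart_dom -> R) : 'rV[R]_r := \row_k x (inr k).
Definition chart_T (x : chart_dom -> R) : 'M[R]_n :=
  coproj_mx - sel_mx *m (chart_Zmx x)^T *m coproj_mx.

(* The first term runs over the symmetric [S] with [S Z = 0], where the rows of
   [Z] indexed by [f] form the identity (see [sym_kernel_factor]); the second runs
   over the span of the rows of [RB] (a basis of the active constraint matrices). *)
Definition chart (RB : 'M[R]_(r, n * n)) (x : chart_dom -> R) : 'M[R]_n :=
  chart_T x *m chart_Smx x *m (chart_T x)^T + vec_mx (chart_mu x *m RB).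

Lemma chart_lipschitz RB : locally_lipschitz (chart RB).
Proof.
have lipZ : locally_lipschitz chart_Zmx.
  apply: lipschitz_coord => i j; case: (insub (i, j) : option chart_Z) => [d|]; last by left.
  by right; exists (inl (inl d)).
have lipS : locally_lipschitz chart_Smx.
  apply: lipschitz_coord => i j.
  case: (insub (ordpair i j) : option chart_S) => [d|]; last by left.
  by right; exists (inl (inr d)).
have lipmu : locally_lipschitz chart_mu.
  apply: (lipschitz_reindex (f := fun x => \matrix_(i, j) x (inr j))
    (r := fun i _ => i) (s := fun _ j => j)).
    by apply: lipschitz_coord => i j; right; exists (inr j).
  by move=> x i j; rewrite !mxE.
have lipT : locally_lipschitz chart_T.
  apply: lipschitzB; first exact: lipschitz_const.
  apply: lipschitzM; last exact: lipschitz_const.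
  by apply: lipschitzM; [exact: lipschitz_const | exact: lipschitz_tr].
apply: lipschitzD; first by apply: lipschitzM; [apply: lipschitzM | apply: lipschitz_tr].
apply: (lipschitz_reindex (f := fun x => chart_mu x *m RB)
  (r := fun _ _ => 0) (s := fun i j => mxvec_index i j)).
  by apply: lipschitzM => //; exact: lipschitz_const.
by move=> x i j; rewrite mxE.
Qed.

Lemma card_chart_dom : (r < tau p)%N -> (#|{: chart_dom}| < tau n)%N.
Proof.
move=> rp; have card_imf : #|imf| = p by rewrite card_imset // card_ord.
have card_coimf : #|~: imf| = (n - p)%N by rewrite cardsCs setCK card_ord card_imf.
have cardZ : #|{: chart_Z}| = ((n - p) * p)%N.
  rewrite card_sig -card_coimf -[p in RHS]card_ord -cardsT -cardsX.
  by apply: eq_card => -[i j]; rewrite !inE andbT.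
have cardS : #|{: chart_S}| = tau (n - p).
  by rewrite card_sig -card_coimf -card_upper_pairs; apply: eq_card => ij; rewrite !inE.
have np : (p <= n)%N by rewrite -card_imf -[n in (_ <= n)%N]card_ord max_card.
rewrite !card_sum cardZ cardS card_ord -(subnKC np) tauD.
move: rp; rewrite subnKC // => rp; nia.
Qed.

Lemma chart_onto (RB : 'M[R]_(r, n * n)) (Z : 'M[R]_(n, p)) (S : 'M[R]_n) (mu : 'rV[R]_r) :
  sel_mx^T *m Z = 1%:M -> S^T = S -> S *m Z = 0 ->
  exists x, chart RB x = S + vec_mx (mu *m RB).
Proof.
move=> FZ Ssym SZ.
pose x (y : chart_dom) : R := match y with
  | inl (inl d) => Z (val d).1 (val d).2
  | inl (inr d) => S (val d).1 (val d).2
  | inr k => mu 0 k end.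
exists x.
have xZ : chart_Zmx x = coproj_mx *m Z.
  rewrite coproj_mxE; apply/matrixP => i j; rewrite !mxE.
  by case: insubP => [d /= -> -> |/negPn /= ->]; rewrite ?mul1r ?mul0r.
have xS : chart_Smx x = coproj_mx *m S *m coproj_mx.
  apply/matrixP => i j; rewrite /coproj_mx mul_mx_diag mul_diag_mx !mxE.
  have Sji : S j i = S i j by rewrite -{1}Ssym mxE.
  rewrite /ordpair; case: leqP => ij; case: insubP => [d /= /andP [/andP [-> ->] _] -> |] /=;
    rewrite ?mul1r ?mulr1 ?Sji //.
    by rewrite ij andbT negb_and !negbK => /orP [] ->; rewrite ?mul0r ?mulr0.
  by rewrite (ltnW ij) andbT negb_and !negbK => /orP [] ->; rewrite ?mul0r ?mulr0.
have xmu : chart_mu x = mu by apply/rowP => k; rewrite !mxE.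
have xT : chart_T x = coproj_mx - sel_mx *m Z^T *m coproj_mx.
  by rewrite /chart_T xZ trmx_mul tr_coproj_mx -!mulmxA coproj_mx_idem.
by rewrite /chart xT xS xmu -(sym_kernel_factor FZ sel_coproj_partition tr_coproj_mx
  coproj_mx_idem coproj_sel_mx Ssym SZ).
Qed.

End Chart.

Lemma full_rank_row_selection (F : fieldType) (n p : nat) (Y : 'M[F]_(n, p)) :
  \rank Y = p -> exists2 f : 'I_p -> 'I_n, injective f & rowsub f Y \in unitmx.
Proof.
move=> rY; have := maxrowsub_free Y; have := @maxrankfun_inj _ _ _ Y.
by move: (maxrankfun Y); rewrite rY => f f_inj f_free; exists f; rewrite -?row_free_unit.
Qed.

Section Exceptional.
Variables (R : realType) (n m1 m2 p : nat).
Variables (A : 'I_(m1 + m2) -> 'M[R]_n) (b : 'I_(m1 + m2) -> R).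

Definition active_mx (u : {ffun 'I_(m1 + m2) -> bool}) : 'M[R]_(m1 + m2, n * n) :=
  \matrix_i (if u i then mxvec (A i) else 0).

Definition exceptional_piece (u : {ffun 'I_(m1 + m2) -> bool}) (f : {ffun 'I_p -> 'I_n})
    (C : 'M[R]_n) : Prop :=
  [/\ injective f, (\rank (active_mx u) < tau p)%N &
      exists x, C = chart (f := f) (row_base (active_mx u)) x].

Definition exceptional (C : 'M[R]_n) : Prop := exists u f, exceptional_piece u f C.

Lemma sym_null_exceptional : sym_null exceptional.
Proof.
apply: (sym_nullS (N2 := fun C => exists uf, exceptional_piece uf.1 uf.2 C)).
  by move=> C _ [u [f Cuf]]; exists (u, f).
apply: sym_null_bigcup_fin => -[u f] /=.
have [[f_inj rk]|bad] := boolp.EM (injective f /\ (\rank (active_mx u) < tau p)%N).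
  apply: (sym_nullS _
    (sym_null_lipschitz_image (card_chart_dom f_inj rk) (chart_lipschitz f _))).
  by move=> C _ [_ _ [x ->]]; exists x.
by apply: sym_null0 => C [f_inj rk _]; apply: bad.
Qed.

Hypothesis A_sym : forall i, symm (A i).

Lemma sum_multipliers_active (u : {ffun 'I_(m1 + m2) -> bool}) (lam : 'I_(m1 + m2) -> R) :
  (forall i, ~~ u i -> lam i = 0) ->
  \sum_i lam i *: A i = vec_mx ((\row_i lam i) *m active_mx u).
Proof.
move=> lam_u; rewrite -[LHS]mxvecK; congr vec_mx.
rewrite mulmx_sum_row linear_sum; apply: eq_bigr => i _.
rewrite linearZ /= rowK !mxE; case: (boolP (u i)) => // /lam_u ->.
by rewrite !scale0r.
Qed.

Lemma first_order_full_rank_exceptional C (Y : 'M[R]_(n, p)) lam :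
  symm C -> (active_dim A b (Y *m Y^T) < tau p)%N -> \rank Y = p ->
  first_order_mult A b C Y lam -> exceptional C.
Proof.
move=> Csym act rY [_ [lam_act SY0]].
have [f0 f0_inj Yf] := full_rank_row_selection rY.
pose f := [ffun j => f0 j]; have f_inj : injective f by move=> i j; rewrite !ffunE => /f0_inj.
pose u := [ffun i => activeb A b (Y *m Y^T) i].
have rk : (\rank (active_mx u) < tau p)%N.
  by apply: leq_trans act; rewrite /active_dim /active_mx; under eq_mx do rewrite ffunE.
pose Z := Y *m invmx (rowsub f0 Y).
have FZ : (sel_mx R f)^T *m Z = 1%:M.
  rewrite /Z mulmxA tr_sel_mul -[X in X *m _ = _](_ : rowsub f0 Y = _) ?mulmxV //.
  by apply/matrixP => j l; rewrite !mxE ffunE.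
have SZ : Smat A C lam *m Z = 0 by rewrite /Z mulmxA SY0 mul0mx.
have [mu lam_mu] : exists mu, (\row_i lam i) *m active_mx u = mu *m row_base (active_mx u).
  by apply/submxP; rewrite eq_row_base submxMl.
have [x Cx] := chart_onto f_inj (row_base (active_mx u)) mu FZ (Smat_sym A_sym lam Csym) SZ.
exists u, f; split=> //; exists x.
rewrite Cx -lam_mu -sum_multipliers_active ?subrK // => i.
by rewrite ffunE => /lam_act.
Qed.

End Exceptional.

Theorem theorem1 (R : realType) (n m1 m2 p : nat)
    (A : 'I_(m1 + m2) -> 'M[R]_n) (b : 'I_(m1 + m2) -> R) :
  (forall i, symm (A i)) ->
  (exists X, feasible A b X) ->
  (0 < p)%N ->
  (* tau(p) > m' = max_{X feasible} dim span{A_i : A_i . X = b_i} *)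
  (forall X, feasible A b X -> (active_dim A b X < tau p)%N) ->
  exists N : 'M[R]_n -> Prop,
    sym_null N /\
    forall C : 'M[R]_n, symm C -> ~ N C -> sdp_attains A b C ->
      forall Y : 'M[R]_(n, p), two_critical A b C Y ->
        bm_global_min A b C Y /\ sdp_optimal A b C (Y *m Y^T).
Proof.
move=> A_sym _ _ active_bound; exists (exceptional p A).
split=> [|C Csym not_exc _ Y Y2]; first exact: sym_null_exceptional.
have [rY|rY] := ltnP (\rank Y) p; first exact: two_critical_rank_deficient_optimal.
have {}rY : \rank Y = p by apply/eqP; rewrite eqn_leq rank_leq_col.
have [Yfeas [lam [lam_fo _]]] := Y2.
have exc := first_order_full_rank_exceptional A_sym Csym (active_bound _ Yfeas) rY lam_fo.
by case: (not_exc exc).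
Qed.
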